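(* Let $A_1,A_2\in\mathbb{R}^{2\times2}$ be such that $\det[A_1,A_2]=0$ and $A_1-A_2$ is invertible, and suppose $A_1$ has non-real eigenvalues. Then $A_2$ either has non-real eigenvalues or is a scalar matrix, and $B:=(A_1A_2+\mathbb{I})(A_1-A_2)^{-1}$ has complex conjugate eigenvalues (i.e. its spectrum is of the form $\{\mu,\overline{\mu}\}$).
   Context: $[A,B]=AB-BA$; $\mathbb{I}$ is the $2\times 2$ identity matrix. *)

From HB Require Import structures.
From mathcomp Require Import all_boot all_order all_algebra.
From mathcomp Require Import complex.
From mathcomp Require Import reals.
Set Implicit Arguments. Unset Strict Implicit. Unset Printing Implicit Defensive.
Import Order.TTheory GRing.Theory Num.Theory.
Local Open Scope ring_scope.

Definition mxC (R : realType) (A : 'M[R]_2) : 'M[R[i]]_2 :=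
  map_mx (fun x => (x%:C)%C) A.

Definition eigvalC (R : realType) (A : 'M[R]_2) (z : R[i]) : Prop :=
  eigenvalue (mxC A) z.

Definition has_nonreal_eigs (R : realType) (A : 'M[R]_2) : Prop :=
  forall z, eigvalC A z -> Im z != 0.

Definition commx (R : realType) (A B : 'M[R]_2) : 'M[R]_2 :=
  A *m B - B *m A.

From mathcomp Require Import all_boot all_order all_algebra.
From mathcomp Require Import complex.
From mathcomp Require Import reals.
From mathcomp Require Import ring.
Set Implicit Arguments. Unset Strict Implicit. Unset Printing Implicit Defensive.
Import Order.TTheory GRing.Theory Num.Theory.
Local Open Scope ring_scope.

(* A real 2x2 matrix has non-real eigenvalues iff its discriminant
   [tr^2 - 4 det] is negative.  If [disc A1 < 0], then [det [A1, A2] = 0]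
   forces [A2 = a I + b A1]: up to the factor [4 (A1 0 1)^2] the determinant
   of the commutator is [P^2 disc A1 - X^2], a sum of two nonpositive terms
   that both vanish only when the traceless parts of [A1], [A2] are parallel.
   Hence [disc A2 = b^2 disc A1], which gives the first claim.  The
   eigenvalues of [B] are the roots of the real quadratic [det (M - z N)],
   with [M = A1 A2 + I] and [N = A1 - A2]; as both are polynomials in [A1],
   its discriminant is [disc A1] times a square, hence nonpositive, and its
   two roots are complex conjugate. *)

Section TwoByTwo.
Variable K : comNzRingType.
Implicit Types A B M N : 'M[K]_2.

Let lift0_ord2 : lift 0 0 = 1 :> 'I_2. Proof. exact: val_inj. Qed.
Let lift1_ord2 : lift 1 0 = 0 :> 'I_2. Proof. exact: val_inj. Qed.

Lemma ord2P (i : 'I_2) : i = 0 \/ i = 1.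
Proof. by case: i => [[|[|//]]] ?; [left|right]; apply: val_inj. Qed.

Lemma mxtrace_mx2 A : \tr A = A 0 0 + A 1 1.
Proof. by rewrite /mxtrace !big_ord_recl big_ord0 addr0 lift0_ord2. Qed.

Lemma mulmx2E M N i j : (M *m N) i j = M i 0 * N 0 j + M i 1 * N 1 j.
Proof. by rewrite mxE !big_ord_recl big_ord0 addr0 lift0_ord2. Qed.

Lemma det_mx2 A : \det A = A 0 0 * A 1 1 - A 0 1 * A 1 0.
Proof.
rewrite (expand_det_row A 0) !big_ord_recl big_ord0 /cofactor !det_mx11 !mxE /=.
by rewrite lift0_ord2 lift1_ord2 addr0 expr0 expr1 mul1r mulN1r mulrN.
Qed.

Lemma mxtrace_mul_adj2 M N :
  \tr (M *m \adj N) = M 0 0 * N 1 1 - M 0 1 * N 1 0 - M 1 0 * N 0 1 + M 1 1 * N 0 0.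
Proof.
rewrite mxtrace_mx2 !mulmx2E !mxE /cofactor !det_mx11 !mxE /= lift0_ord2 lift1_ord2.
by rewrite !modn_small //= expr0 expr1 expr2; ring.
Qed.

Lemma det_pencil2 M N z :
  \det (M - z *: N) = \det N * z ^+ 2 - \tr (M *m \adj N) * z + \det M.
Proof. by rewrite mxtrace_mul_adj2 !det_mx2 !mxE; ring. Qed.

Definition mx_disc A : K := \tr A ^+ 2 - 4 * \det A.

Lemma mx_disc2 A : mx_disc A = (A 0 0 - A 1 1) ^+ 2 + 4 * A 0 1 * A 1 0.
Proof. by rewrite /mx_disc mxtrace_mx2 det_mx2; ring. Qed.

Lemma mx_disc_affine A a b : mx_disc (a%:M + b *: A) = b ^+ 2 * mx_disc A.
Proof. by rewrite !mx_disc2 !mxE /= mulr1n !mulr0n; ring. Qed.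

(* The squared factor is the Bezoutian of [b X^2 + a X + 1] and
   [(1 - b) X - a], the polynomials in [A] giving [A B + 1] and [A - B]. *)
Lemma pencil_disc_affine A a b (B := a%:M + b *: A) :
  \tr ((A *m B + 1%:M) *m \adj (A - B)) ^+ 2
    - 4 * \det (A - B) * \det (A *m B + 1%:M)
  = mx_disc A * (b * (1 - b) * \det A - a * b * \tr A - a ^+ 2 - (1 - b)) ^+ 2.
Proof.
rewrite /B mx_disc2 mxtrace_mul_adj2 mxtrace_mx2 !det_mx2 !(mulmx2E, mxE) /=.
by rewrite !mulr1n !mulr0n; ring.
Qed.

(* [P] and [Q] vanish exactly when the traceless parts of [A] and [B] are
   parallel (given [A 0 1 != 0]). *)
Lemma det_commutator2 A B
    (P := A 0 1 * (B 0 0 - B 1 1) - B 0 1 * (A 0 0 - A 1 1))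
    (Q := A 0 1 * B 1 0 - B 0 1 * A 1 0) :
  4 * A 0 1 ^+ 2 * \det (A *m B - B *m A)
  = P ^+ 2 * mx_disc A - (2 * A 0 1 * Q + (A 0 0 - A 1 1) * P) ^+ 2.
Proof. by rewrite /P /Q mx_disc2 det_mx2 !(mulmx2E, mxE); ring. Qed.

End TwoByTwo.

Lemma eigenvalue_det (F : fieldType) n (A : 'M[F]_n) a :
  eigenvalue A a <-> \det (A - a%:M) = 0.
Proof.
rewrite /eigenvalue /eigenspace kermx_eq0 row_free_unit unitmxE unitfE negbK.
by split=> /eqP.
Qed.

Section RealQuadratics.
Variable R : realType.

Definition quadC (a b c : R) (z : R[i]) : R[i] :=
  (a%:C)%C * z ^+ 2 + (b%:C)%C * z + (c%:C)%C.

(* Meaningful only when [b^2 <= 4 a c]: [Num.sqrt] is [0] on negatives. *)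
Definition quad_root (a b c : R) : R[i] :=
  ((- b / (2 * a)) +i* (Num.sqrt (4 * a * c - b ^+ 2) / (2 * a)))%C.

Lemma quadC_real a b c x : quadC a b c (x%:C)%C = ((a * x ^+ 2 + b * x + c)%:C)%C.
Proof. by rewrite /quadC !rmorphD !rmorphM. Qed.

Lemma quad_real_root a b c :
  a != 0 -> 0 <= b ^+ 2 - 4 * a * c -> exists x : R, a * x ^+ 2 + b * x + c = 0.
Proof.
move=> a0 disc_ge0; set s := Num.sqrt (b ^+ 2 - 4 * a * c).
have a4 : 4 * a != 0 by rewrite mulf_neq0 ?pnatr_eq0.
have cE : c = (b ^+ 2 - s ^+ 2) / (4 * a) by rewrite sqr_sqrtr //; field.
by exists ((- b + s) / (2 * a)); rewrite cE; field.
Qed.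

Lemma quadC_factor a b c z : a != 0 -> b ^+ 2 - 4 * a * c <= 0 ->
  quadC a b c z
  = (a%:C)%C * ((z - quad_root a b c) * (z - (quad_root a b c)^*%C)).
Proof.
move=> a0 disc_le0; rewrite /quad_root; set s := Num.sqrt _.
have a4 : 4 * a != 0 by rewrite mulf_neq0 ?pnatr_eq0.
have cE : c = (s ^+ 2 + b ^+ 2) / (4 * a).
  by rewrite sqr_sqrtr ?subr_ge0 -1?subr_le0 //; field.
case: z => x y; apply/eqP; rewrite /quadC expr2 eq_complex /= cE.
by apply/andP; split; apply/eqP; field.
Qed.

Lemma quad_rootsP a b c : a != 0 -> b ^+ 2 - 4 * a * c <= 0 -> forall z,
  quadC a b c z = 0 <-> z = quad_root a b c \/ z = (quad_root a b c)^*%C.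
Proof.
move=> a0 disc_le0 z; rewrite quadC_factor //.
have aC0 : (a%:C)%C != 0 :> R[i] by rewrite fmorph_eq0.
split=> [/eqP|[] ->]; [|by rewrite subrr ?mul0r ?mulr0..].
rewrite mulf_eq0 (negPf aC0) mulf_eq0 !subr_eq0.
by move=> /orP[|/orP[]] /eqP; [|left|right].
Qed.

End RealQuadratics.

Lemma sqr_mul_neg_eq_sqr (R : realDomainType) (x y d : R) :
  d < 0 -> x ^+ 2 * d = y ^+ 2 -> x = 0 /\ y = 0.
Proof.
move=> d_lt0 eq_sq.
have y2_le0 : y ^+ 2 <= 0 by rewrite -eq_sq nmulr_lle0 ?sqr_ge0.
have y0 : y = 0 by apply/eqP; rewrite -sqrf_eq0 eq_le y2_le0 sqr_ge0.
split=> //; apply/eqP; move: eq_sq; rewrite y0 expr0n /=.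
by move/eqP; rewrite mulf_eq0 sqrf_eq0 (negPf (ltr0_neq0 d_lt0)) orbF.
Qed.

Section RealMatrices.
Variable R : realType.
Implicit Types A B M N : 'M[R]_2.

Lemma eigvalC_mulmx_invmx M N z : N \in unitmx ->
  eigvalC (M *m invmx N) z <->
  quadC (\det N) (- \tr (M *m \adj N)) (\det M) z = 0.
Proof.
move=> N_unit.
have NC_unit : mxC N \in unitmx by rewrite /mxC map_unitmx.
rewrite /eigvalC eigenvalue_det.
have -> : mxC (M *m invmx N) - z%:M = (mxC M - z *: mxC N) *m invmx (mxC N).
  by rewrite mulmxBl -scalemxAl mulmxV // scalemx1 /mxC map_mxM map_invmx.
rewrite det_mulmx det_inv.
have -> : \det (mxC M - z *: mxC N)
          = quadC (\det N) (- \tr (M *m \adj N)) (\det M) z.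
  rewrite det_pencil2 /mxC -map_mx_adj -map_mxM trace_map_mx !det_map_mx.
  by rewrite /quadC rmorphN mulNr.
move: NC_unit; rewrite unitmxE unitfE => detNC0.
split=> [/eqP|->]; rewrite ?mul0r //.
by rewrite mulf_eq0 invr_eq0 (negPf detNC0) orbF => /eqP.
Qed.

Lemma eigvalCE A z : eigvalC A z <-> quadC 1 (- \tr A) (\det A) z = 0.
Proof.
have := @eigvalC_mulmx_invmx A 1%:M z (unitmx1 _ _).
by rewrite invmx1 mulmx1 det1 adj1 mulmx1.
Qed.

Lemma has_nonreal_eigsP A : has_nonreal_eigs A <-> mx_disc A < 0.
Proof.
have disc_quad : (- \tr A) ^+ 2 - 4 * 1 * \det A = mx_disc A.
  by rewrite sqrrN mulr1.
split=> [nonreal|disc_lt0 z].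
  rewrite ltNge; apply/negP; rewrite -disc_quad => /(quad_real_root (oner_neq0 R)).
  case=> x root_x.
  have /nonreal : eigvalC A (x%:C)%C by apply/eigvalCE; rewrite quadC_real root_x.
  by rewrite -complexIm /= rmorph0 eqxx.
have Im_root : complex.Im (quad_root 1 (- \tr A) (\det A)) != 0.
  rewrite /= mulf_neq0 ?invr_eq0 ?mulf_neq0 ?oner_neq0 ?pnatr_eq0 //.
  by rewrite sqrtr_eq0 -ltNge -opprB disc_quad oppr_gt0.
have disc_le0 : (- \tr A) ^+ 2 - 4 * 1 * \det A <= 0 by rewrite disc_quad ltW.
move=> /eigvalCE /(quad_rootsP (oner_neq0 R) disc_le0) [|] ->.
  by rewrite -complexIm fmorph_eq0.
by rewrite -complexIm fmorph_eq0 /= oppr_eq0.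
Qed.

Lemma commx_det0_affine A B : mx_disc A < 0 -> \det (commx A B) = 0 ->
  exists a b, B = a%:M + b *: A.
Proof.
move=> disc_lt0 comm_det0.
have A01_neq0 : A 0 1 != 0.
  apply: contraTneq disc_lt0 => A01_0.
  by rewrite mx_disc2 A01_0 mulr0 mul0r addr0 -leNgt sqr_ge0.
have := det_commutator2 A B; rewrite -/(commx A B) comm_det0 mulr0.
move=> /esym /subr0_eq /(sqr_mul_neg_eq_sqr disc_lt0) [P0 X0].
move: X0; rewrite P0 mulr0 addr0 => /eqP.
rewrite !mulf_eq0 pnatr_eq0 (negPf A01_neq0) /= => /eqP Q0.
set b := B 0 1 / A 0 1.
have B10E : B 1 0 = b * A 1 0.
  by apply: (mulfI A01_neq0); rewrite (subr0_eq Q0) /b; field.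
have B11E : B 1 1 = B 0 0 - b * (A 0 0 - A 1 1).
  apply/esym/(mulfI A01_neq0)/eqP.
  by rewrite -subr_eq0 -[X in _ == X]P0 /b; apply/eqP; field.
exists (B 0 0 - b * A 0 0), b; apply/matrixP => i j; rewrite !mxE.
case: (ord2P i) => ->; case: (ord2P j) => -> /=; rewrite ?mulr1n ?mulr0n ?add0r.
- by ring.
- by rewrite /b; field.
- exact: B10E.
- by rewrite B11E; ring.
Qed.

End RealMatrices.

Theorem lemma2p9 (R : realType) (A1 A2 : 'M[R]_2) :
  \det (commx A1 A2) = 0 ->
  A1 - A2 \in unitmx ->
  has_nonreal_eigs A1 ->
  (has_nonreal_eigs A2 \/ is_scalar_mx A2) /\
  (exists mu : R[i], forall z : R[i],
     eigvalC ((A1 *m A2 + 1%:M) *m invmx (A1 - A2)) z <->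
     (z = mu \/ z = (mu^*)%C)).
Proof.
move=> comm_det0 unit_diff /has_nonreal_eigsP disc_lt0.
have [a [b A2E]] := commx_det0_affine disc_lt0 comm_det0.
split.
  have [b0|b_neq0] := eqVneq b 0.
    by right; rewrite A2E b0 scale0r addr0 scalar_mx_is_scalar.
  have b2_gt0 : 0 < b ^+ 2 by rewrite lt_def sqrf_eq0 b_neq0 sqr_ge0.
  by left; apply/has_nonreal_eigsP; rewrite A2E mx_disc_affine pmulr_rlt0.
have detN0 : \det (A1 - A2) != 0 by rewrite -unitfE -unitmxE.
eexists => z; rewrite eigvalC_mulmx_invmx //; apply: quad_rootsP => //.
by rewrite sqrrN A2E pencil_disc_affine nmulr_rle0 // sqr_ge0.
Qed.
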